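(* Let $d\ge 2$. Identifying $P(\mathbb{Z}^d)$ with its image under the diagonal embedding into $\mathbb{Z}_S^d$, we have $P(\mathbb{Z}_S^d)=\mathbb{Z}_S^\times\cdot P(\mathbb{Z}^d)$.
   Context: $S=\{\infty,p_1,\dots,p_s\}$ with $p_i$ distinct primes, $\mathbb{Z}_S=\mathbb{Z}[p_1^{-1},\dots,p_s^{-1}]$, $\mathbb{Z}_S^\times=\{\pm p_1^{k_1}\cdots p_s^{k_s}:k_i\in\mathbb{Z}\}$. $P(\mathbb{Z}_S^d)=\mathrm{SL}_d(\mathbb{Z}_S)\cdot\mathbf e_1$ and $P(\mathbb{Z}^d)=\mathrm{SL}_d(\mathbb{Z})\cdot\mathbf e_1$ (the integer vectors with coprime coordinates). *)

From HB Require Import structures.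
From mathcomp Require Import all_boot all_order all_algebra.
Set Implicit Arguments. Unset Strict Implicit. Unset Printing Implicit Defensive.
Import Order.TTheory GRing.Theory Num.Theory.
Local Open Scope ring_scope.

(* S = {oo, p_1, ..., p_s} is encoded by the list ps = [:: p_1; ...; p_s]
   of distinct primes.  Z_S = Z[1/p_1,...,1/p_s] is realised inside rat. *)

Definition inZS (ps : seq nat) (q : rat) : bool :=
  all (fun p => p \in ps) (primes `|denq q|%N).

Definition unitZS (ps : seq nat) (u : rat) : Prop :=
  exists (b : bool) (k : 'I_(size ps) -> int),
    u = (-1) ^+ b * \prod_(i < size ps) ((nth 0%N ps i)%:R : rat) ^ (k i).

Definition e1 (R : nzRingType) (d : nat) : 'cV[R]_d :=
  \col_(i < d) (if nat_of_ord i == 0%N then 1 else 0).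

Definition SL_ZS (ps : seq nat) (d : nat) (M : 'M[rat]_d) : Prop :=
  (forall i j, inZS ps (M i j)) /\ \det M = 1.

Definition P_ZS (ps : seq nat) (d : nat) (v : 'cV[rat]_d) : Prop :=
  exists M : 'M[rat]_d, SL_ZS ps M /\ v = M *m e1 rat d.

Definition P_Z (d : nat) (w : 'cV[int]_d) : Prop :=
  exists A : 'M[int]_d, \det A = 1 /\ w = A *m e1 int d.

Definition embZ (d : nat) (w : 'cV[int]_d) : 'cV[rat]_d := map_mx intr w.

From HB Require Import structures.
From mathcomp Require Import all_boot all_order all_algebra.
Import Order.TTheory GRing.Theory Num.Theory.
Local Open Scope ring_scope.

Set Implicit Arguments. Unset Strict Implicit. Unset Printing Implicit Defensive.

(* Clearing denominators, a vector M e_1 of P(Z_S^d) is k^-1 N e_1 with k a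
   product of the p_i and N an integer matrix of determinant k^d.  By the Smith
   normal form the integer column N e_1 is c w with w = A e_1 for some
   A in SL_d(Z); as c divides the first column of N it divides det N = k^d, so
   c / k is in Z_S^x.  Conversely u A e_1 = (A diag(u, u^-1, 1, ..., 1)) e_1,
   and this matrix lies in SL_d(Z_S) because d >= 2. *)

Lemma e1_delta (R : nzRingType) n : e1 R n.+1 = delta_mx 0 0.
Proof. by apply/matrixP => i j; rewrite !mxE (ord1 j) eqxx andbT; case: i => -[]. Qed.

Lemma mulmx_e1 (R : nzRingType) m n (A : 'M[R]_(m, n.+1)) : A *m e1 R n.+1 = col 0 A.
Proof. by rewrite e1_delta colE. Qed.

Lemma map_mx_e1 (R S : nzRingType) (f : {rmorphism R -> S}) n :
  map_mx f (e1 R n) = e1 S n.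
Proof. by apply/matrixP => i j; rewrite !mxE; case: ifP; rewrite ?rmorph1 ?rmorph0. Qed.

Lemma diag_mx_e1 (R : nzRingType) n (dg : 'rV[R]_n.+1) :
  diag_mx dg *m e1 R n.+1 = dg 0 0 *: e1 R n.+1.
Proof.
rewrite mulmx_e1; apply/matrixP => i j.
rewrite !mxE; have [->|i_neq0] := eqVneq i 0; first by rewrite mulr1n mulr1.
by rewrite ifN ?mulr0 //; exact: i_neq0.
Qed.

Lemma Qint_mul_den (q : rat) (m : int) :
  (q * m%:~R \is a Num.int) = (denq q %| m)%Z.
Proof.
apply/idP/idP => [/intrP[z qmz] | /dvdzP[k ->]].
  have numqm : numq q * m = z * denq q.
    by apply: (intr_inj (R := rat)); rewrite !intrM numqE -qmz mulrAC.
  have : (denq q %| numq q * m)%Z by apply/dvdzP; exists z.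
  by rewrite unfold_in /= abszM Gauss_dvdr // coprime_sym coprime_num_den.
by rewrite intrM mulrA mulrAC -numqE rpredM ?rpred_int.
Qed.

Lemma dvdz_det_col n (A : 'M[int]_n) j (c : int) :
  (forall i, (c %| A i j)%Z) -> (c %| \det A)%Z.
Proof.
by move=> c_col; rewrite (expand_det_col A j) rpred_sum // => i _; rewrite dvdz_mulr.
Qed.

Lemma int_col_primitive_scale n (x : 'cV[int]_n.+1) :
  exists c (w : 'cV[int]_n.+1), P_Z w /\ x = c *: w.
Proof.
have [L unit_L [R _ [s _ defx]]] := int_Smith_normal_form x.
have x_Le1 : x = (s`_0 * R 0 0) *: (L *m e1 int n.+1).
  rewrite defx -mulmxA scalemxAr; congr (_ *m _); apply/matrixP => i j.
  rewrite (ord1 j) !mxE big_ord1 !mxE /=.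
  by case: (nat_of_ord i =P 0%N) => [->|_]; rewrite ?mulr1n ?mulr1 ?mulr0n ?mul0r ?mulr0.
have det_L2 : \det L * \det L = 1 by move: unit_L; rewrite unitmxE => /orP[] /eqP ->.
pose dg : 'rV[int]_n.+1 := \row_j (if j == 0 then \det L else 1).
exists (s`_0 * R 0 0 * \det L), (L *m diag_mx dg *m e1 int n.+1); split.
  exists (L *m diag_mx dg); split => //.
  by rewrite det_mulmx det_diag big_ord_recl big1 => [|i _]; rewrite !mxE ?mulr1.
by rewrite -mulmxA diag_mx_e1 mxE eqxx -scalemxAr scalerA -mulrA det_L2 mulr1.
Qed.

Section SIntegers.

Variable ps : seq nat.
Hypothesis ps_prime : all prime ps.

Local Notation piS := [pred p in ps].

Lemma inZS_pnat q : inZS ps q = piS.-nat `|denq q|%N.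
Proof. by rewrite /pnat absz_gt0 denq_eq0. Qed.

Lemma inZS_mul_pnat q (m : nat) :
  piS.-nat m -> q * m%:R \is a Num.int -> inZS ps q.
Proof.
move=> m_nat; rewrite -[m%:R]/((m%:Z)%:~R) Qint_mul_den inZS_pnat => den_m.
exact: pnat_dvd m_nat.
Qed.

Lemma inZS_int (z : int) : inZS ps z%:~R.
Proof. by rewrite /inZS denq_int. Qed.

Lemma inZSM q r : inZS ps q -> inZS ps r -> inZS ps (q * r).
Proof.
rewrite inZS_pnat => q_nat; rewrite inZS_pnat => r_nat.
apply: (@inZS_mul_pnat _ (`|denq q| * `|denq r|)%N); first by rewrite pnatM q_nat.
rewrite natrM !natr_absz !gtr0_norm ?denq_gt0 // mulrACA.
by rewrite rpredM // -numqE rpred_int.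
Qed.

Lemma inZS_prod (I : finType) (F : I -> rat) :
  (forall i, inZS ps (F i)) -> inZS ps (\prod_i F i).
Proof.
by move=> ZS_F; apply: (big_ind (inZS ps)); [exact: (inZS_int 1) | exact: inZSM |].
Qed.

Lemma nth_ps_prime (i : 'I_(size ps)) : prime (nth 0%N ps i).
Proof. by apply: (allP ps_prime); exact: mem_nth. Qed.

Lemma nth_ps_neq0 (i : 'I_(size ps)) : (nth 0%N ps i)%:R != 0 :> rat.
Proof. by rewrite pnatr_eq0 -lt0n prime_gt0 ?nth_ps_prime. Qed.

Lemma unitZS_sign (b : bool) : unitZS ps ((-1) ^+ b).
Proof. by exists b, (fun=> 0); rewrite big1 ?mulr1 // => i _; rewrite expr0z. Qed.

Lemma unitZS1 : unitZS ps 1.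
Proof. exact: (unitZS_sign false). Qed.

Lemma unitZSM u v : unitZS ps u -> unitZS ps v -> unitZS ps (u * v).
Proof.
move=> [b [k ->]] [b' [k' ->]]; exists (b (+) b'), (fun i => k i + k' i).
rewrite mulrACA signr_addb -big_split /=; congr (_ * _).
by apply: eq_bigr => i _; rewrite expfzDr ?nth_ps_neq0.
Qed.

Lemma unitZSX u n : unitZS ps u -> unitZS ps (u ^+ n).
Proof.
by move=> uS; elim: n => [|n IHn]; [exact: unitZS1 | rewrite exprS; exact: unitZSM].
Qed.

Lemma unitZSV u : unitZS ps u -> unitZS ps u^-1.
Proof.
move=> [b [k ->]]; exists b, (fun i => - k i).
rewrite invr_signM -prodfV; congr (_ * _).
by apply: eq_bigr => i _; rewrite invr_expz.
Qed.

Lemma unitZS_neq0 u : unitZS ps u -> u != 0.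
Proof.
move=> [b [k ->]]; rewrite mulf_neq0 ?signr_eq0 //; apply/prodf_neq0.
by move=> i _; rewrite expfz_neq0 ?nth_ps_neq0.
Qed.

Lemma unitZS_prime p : p \in ps -> unitZS ps p%:R.
Proof.
move=> p_ps; pose i0 := Ordinal (etrans (index_mem p ps) p_ps).
exists false, (fun i => (i == i0)%:Z); rewrite mul1r (bigD1 i0) //= big1 => [|i /negbTE ->].
  by rewrite eqxx mulr1 expr1z nth_index.
by rewrite expr0z.
Qed.

Lemma unitZS_pnat n : piS.-nat n -> unitZS ps n%:R.
Proof.
move=> /andP[n_gt0 /allP n_ps].
rewrite [n]prod_prime_decomp // prime_decompE big_map natr_prod big_seq.
apply: (big_ind (unitZS ps)) => [|u v|p p_n]; [exact: unitZS1 | exact: unitZSM |].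
by rewrite natrX; apply/unitZSX/unitZS_prime/n_ps.
Qed.

Lemma unitZS_frac (c : int) (m : nat) :
  piS.-nat `|c|%N -> piS.-nat m -> unitZS ps (c%:~R / m%:R).
Proof.
move=> c_nat m_nat; rewrite [c]intEsign rmorphM rmorph_sign /= -mulrA.
apply: unitZSM; first exact: unitZS_sign.
by apply: unitZSM; [exact: unitZS_pnat | exact/unitZSV/unitZS_pnat].
Qed.

Lemma inZS_nth_expz (i : 'I_(size ps)) (k : int) :
  inZS ps ((nth 0%N ps i)%:R ^ k).
Proof.
set p := nth 0%N ps i.
have p_nat : piS.-nat p by rewrite pnatE ?nth_ps_prime // inE mem_nth.
case: k => n; first by rewrite -exprnP -natrX -[_%:R]/((p ^ n)%N%:Z)%:~R inZS_int.
apply: (inZS_mul_pnat (m := (p ^ n.+1)%N)); first by rewrite pnatX p_nat.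
by rewrite NegzE natrX -exprnN mulVf ?expf_neq0 ?nth_ps_neq0 ?rpred1.
Qed.

Lemma unitZS_inZS u : unitZS ps u -> inZS ps u.
Proof.
move=> [b [k ->]]; apply: inZSM; last by apply: inZS_prod => i; exact: inZS_nth_expz.
by rewrite -(rmorph_sign (intr : int -> rat)) inZS_int.
Qed.

Lemma ZS_mx_clear_den m n (M : 'M[rat]_(m, n)) :
  (forall i j, inZS ps (M i j)) ->
  exists2 k : nat, piS.-nat k & exists N : 'M[int]_(m, n), map_mx intr N = k%:R *: M.
Proof.
move=> ZS_M; pose k := (\prod_(ij : 'I_m * 'I_n) `|denq (M ij.1 ij.2)|)%N.
exists k.
  apply: (big_ind (pnat piS)) => [|a b|ij _]; [by [] | by rewrite pnatM => -> -> |].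
  by rewrite -inZS_pnat.
have den_k i j : (denq (M i j) %| k%:Z)%Z.
  by rewrite unfold_in /= /k (bigD1 (i, j)) //= dvdn_mulr.
exists (map_mx numq (k%:R *: M)); apply/matrixP => i j; rewrite !mxE numqK //.
by rewrite mulrC -[k%:R]/((k%:Z)%:~R) Qint_mul_den.
Qed.

Lemma P_ZS_decomp n (v : 'cV[rat]_n.+1) :
  P_ZS ps v -> exists u w, unitZS ps u /\ P_Z w /\ v = u *: embZ w.
Proof.
move=> [M [[ZS_M det_M] ->]].
have [k k_nat [N defN]] := ZS_mx_clear_den ZS_M.
have k_neq0 : k%:R != 0 :> rat by rewrite pnatr_eq0 -lt0n; case/andP: k_nat.
have det_N : \det N = (k ^ n.+1)%N%:Z.
  by apply: (intr_inj (R := rat)); rewrite -det_map_mx defN detZ det_M mulr1 -natrX.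
have [c [w [Pw Ne1]]] := int_col_primitive_scale (N *m e1 int n.+1).
have c_det_N : (c %| \det N)%Z.
  apply: (@dvdz_det_col _ _ 0) => i.
  have := congr1 (fun x : 'cV[int]_n.+1 => x i 0) Ne1.
  by rewrite mulmx_e1 !mxE => ->; rewrite dvdz_mulr.
exists (c%:~R / k%:R), w; split; last split => //.
  apply: unitZS_frac => //; apply: (@pnat_dvd _ (k ^ n.+1)); last by rewrite pnatX k_nat.
  by move: c_det_N; rewrite det_N unfold_in.
apply: (scalerI k_neq0); rewrite scalemxAl -defN /embZ scalerA mulrCA mulfV // mulr1.
by rewrite -map_mxZ -Ne1 map_mxM map_mx_e1.
Qed.

Lemma P_ZS_scale n (u : rat) (w : 'cV[int]_n.+2) :
  unitZS ps u -> P_Z w -> P_ZS ps (u *: embZ w).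
Proof.
move=> uS [A [det_A ->]].
pose dg : 'rV[rat]_n.+2 :=
  \row_j (if j == 0 then u else if j == 1 then u^-1 else 1).
exists (map_mx intr A *m diag_mx dg); split; first split.
- move=> i j; rewrite mul_mx_diag !mxE; apply: inZSM; first exact: inZS_int.
  apply: unitZS_inZS; case: ifP => _; first exact: uS.
  by case: ifP => _; [exact: unitZSV | exact: unitZS1].
- rewrite det_mulmx det_map_mx det_A rmorph1 mul1r det_diag !big_ord_recl big1 => [|i _].
    by rewrite !mxE /= mulr1 mulfV ?unitZS_neq0.
  by rewrite !mxE.
by rewrite -mulmxA diag_mx_e1 mxE eqxx -scalemxAr /embZ map_mxM map_mx_e1.
Qed.

End SIntegers.

Theorem proposition2p4 (ps : seq nat) (hprime : all prime ps) (huniq : uniq ps)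
    (d : nat) (hd : (2 <= d)%N) (v : 'cV[rat]_d) :
  P_ZS ps v <->
  exists (u : rat) (w : 'cV[int]_d), unitZS ps u /\ P_Z w /\ v = u *: embZ w.
Proof.
case: d hd v => [|[|n]] // _ v; split; first exact: P_ZS_decomp.
by move=> [u [w [uS [Pw ->]]]]; exact: P_ZS_scale.
Qed.
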